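(* Let $l>0$. For each $d\ge1$ let $Z_1,Z_2\sim\mathcal{N}(0,1)$ and $Z_x\sim\mathcal{N}_d(0,I_d)$ be random variables on a common probability space, not necessarily independent. Then, uniformly over all $\alpha\in[0,\infty)$, $$\lim_{d\to\infty}\Big(\mathbb{E}\big[Z_2\,\{1\wedge\exp(-l\alpha Z_1-l^2\lVert Z_x\rVert^2/(2d))\}\big]-\mathbb{E}\big[Z_2\,\{1\wedge\exp(-l\alpha Z_1-l^2/2)\}\big]\Big)=0.$$ *)

From HB Require Import structures.
From mathcomp Require Import all_boot all_order all_algebra.
From mathcomp Require Import all_classical all_reals all_analysis.
Set Implicit Arguments. Unset Strict Implicit. Unset Printing Implicit Defensive.
Import Order.TTheory GRing.Theory Num.Theory.
Local Open Scope classical_set_scope.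
Local Open Scope ring_scope.

Definition std_normal_rv {dsp : measure_display} {T : measurableType dsp}
  {R : realType} (P : probability T R) (X : T -> R) : Prop :=
  measurable_fun setT X /\
  forall B : set R, measurable B -> P (X @^-1` B) = normal_prob 0 1 B.

(* X = (X_0,...,X_{n-1}) : T -> R^n has law N_n(0, I_n): its law agrees with
   the n-fold product of N(0,1) on all measurable rectangles (which determines
   the joint law). *)
Definition std_gauss_vector {dsp : measure_display} {T : measurableType dsp}
  {R : realType} (P : probability T R) (n : nat) (X : 'I_n -> T -> R) : Prop :=
  (forall i, measurable_fun setT (X i)) /\
  forall B : 'I_n -> set R, (forall i, measurable (B i)) ->
    P (\bigcap_(i in [set: 'I_n]) (X i @^-1` B i)) =
    (\prod_(i < n) fine (normal_prob 0 1 (B i)))%:E.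

Definition sqnorm {R : realType} (n : nat) (x : 'I_n -> R) : R :=
  \sum_(i < n) x i ^+ 2.

(* The map u |-> min 1 (exp u) is 1-Lipschitz, and the two exponents differ by
   (l^2/2) (|Z_x|^2/d - 1).  Hence, for every t > 0, by AM-GM the difference of
   expectations is at most
     (l^2/2) E[|Z_2| |(|Z_x|^2/d - 1)|]
       <= (t E[Z_2^2] + t^-1 (l^2/2)^2 E[(|Z_x|^2/d - 1)^2]) / 2,
   whatever alpha and whatever the
   dependence between Z_1, Z_2 and Z_x.  As the coordinates of Z_x are
   independent N(0,1) with E X^2 = 1 and E X^4 < oo, the last expectation is
   (E X^4 - 1)/d, and t = eps concludes. *)

From HB Require Import structures.
From mathcomp Require Import all_boot all_order all_algebra.
From mathcomp Require Import all_classical all_reals all_analysis.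
From mathcomp Require Import measurable_realfun.
From mathcomp Require Import ring lra.
Set Implicit Arguments. Unset Strict Implicit. Unset Printing Implicit Defensive.
Import Order.TTheory GRing.Theory Num.Theory.
Local Open Scope classical_set_scope.
Local Open Scope ring_scope.

Section real_inequalities.
Variable F : realFieldType.
Implicit Types x y t c j : F.

Lemma mulr_le_AMGM t x y : 0 < t -> x * y <= (t * x ^+ 2 + t^-1 * y ^+ 2) / 2.
Proof.
move=> t0; rewrite -subr_ge0.
have -> : (t * x ^+ 2 + t^-1 * y ^+ 2) / 2 - x * y = (t * x - y) ^+ 2 / (2 * t).
  by field; rewrite gt_eqF.
by rewrite divr_ge0 ?sqr_ge0 // mulr_ge0 // ltW.
Qed.

Lemma AMGM_bound_lt t q : 0 < t -> q < t ^+ 2 -> (t + t^-1 * q) / 2 < t.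
Proof.
move=> t0 qt; rewrite ltr_pdivrMr // mulr_natr mulr2n ltrD2l.
by rewrite -ltr_pdivlMl ?invr_gt0 // invrK -expr2.
Qed.

Lemma normr_le1Dsqr x : `|x| <= 1 + x ^+ 2.
Proof. rewrite -real_normK ?num_real //; have := normr_ge0 x; nra. Qed.

Lemma ler_of_forall_ler_addr01 x y c :
  (forall t, 0 < t < 1 -> x <= y + t * c) -> x <= y.
Proof.
move=> H; apply/ler_addgt0Pr => e e0.
have [c0|c0] := lerP c 0.
  by have := H (2^-1) ltac:(apply/andP; split; lra); nra.
pose t := Num.min 2^-1 (e / c).
have t0 : 0 < t by rewrite lt_min invr_gt0 ltr0n divr_gt0.
have t1 : t < 1 by rewrite gt_min; apply/orP; left; lra.
have tc : t * c <= e by rewrite -ler_pdivlMr // ge_min lexx orbT.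
by apply: (le_trans (H t _)); [rewrite t0 t1|lra].
Qed.

Lemma eq_of_scale_bounds c j : 0 <= c -> 0 <= j ->
  (forall t, 1 < t -> c + (1 - t^-2) / 2 * j <= t * c) ->
  (forall t, 0 < t < 1 -> c <= t * c + (t^-2 - 1) / 2 * j) -> j = c.
Proof.
move=> c0 j0 ub lb; apply/le_anti/andP; split.
- apply: (@ler_of_forall_ler_addr01 _ _ (3 * c)) => h /andP[h0 h1].
  have := ub (1 + h); rewrite ltrDl => /(_ h0).
  have -> : (1 - (1 + h)^-2) / 2 = h * ((2 + h) / (2 * (1 + h) ^+ 2)) by field; lra.
  set k := _ / _ => H; have : h * (k * j) <= h * c by lra.
  rewrite ler_pM2l // /k mulrAC ler_pdivrMr; last by nra.
  nra.
- apply: (@ler_of_forall_ler_addr01 _ _ (2 * c)) => h /andP[h0 h1].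
  have := lb (1 - h); rewrite subr_gt0 gtrBl h0 h1 => /(_ isT).
  have -> : ((1 - h)^-2 - 1) / 2 = h * ((2 - h) / (2 * (1 - h) ^+ 2)) by field; lra.
  set k := _ / _ => H; have : h * c <= h * (k * j) by lra.
  rewrite ler_pM2l // /k mulrAC ler_pdivlMr; last by nra.
  nra.
Qed.
End real_inequalities.

Section expR_inequalities.
Variable R : realType.
Implicit Types a b : R.

Lemma expR_tangent a b : expR b + (a - b) * expR b <= expR a.
Proof.
have -> : expR a = expR b * expR (a - b) by rewrite -expRD addrC subrK.
by rewrite mulrC -{1}[expR b]mulr1 -mulrDr ler_wpM2l ?expR_ge0 ?expR_ge1Dx.
Qed.

Lemma min1_expR_lipschitz a b :
  `|Num.min 1 (expR a) - Num.min 1 (expR b)| <= `|a - b|.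
Proof.
wlog ba : a b / b <= a.
  move=> H; have [/H //|/ltW ab] := leP b a.
  by rewrite distrC (distrC a); exact: H.
suff /andP[g0 gab] : 0 <= Num.min 1 (expR a) - Num.min 1 (expR b) <= a - b.
  by rewrite !ger0_norm // subr_ge0.
have [a0|a0] := lerP a 0.
  have b0 : b <= 0 := le_trans ba a0.
  rewrite !min_r ?expR_le1 // subr_ge0 ler_expR ba /=.
  have := expR_tangent b a; have := expR_ge0 a.
  have : expR a <= 1 by rewrite expR_le1.
  nra.
rewrite min_l; last by rewrite ltW // expR_gt1.
have [b0|b0] := lerP b 0.
  rewrite min_r ?expR_le1 // subr_ge0 expR_le1 b0 /=.
  by have := expR_ge1Dx b; lra.
by rewrite min_l ?subrr ?lexx /=; [lra|rewrite ltW // expR_gt1].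
Qed.
End expR_inequalities.

Section integral_EFin.
Context {R : realType} {dsp : measure_display} {T : measurableType dsp}.
Variable mu : {measure set T -> \bar R}.
Local Open Scope ereal_scope.

Lemma ge0_integralZl_EFinM (k : R) (f : T -> R) : (0 <= k)%R ->
  measurable_fun setT f -> (forall w, 0 <= f w)%R ->
  \int[mu]_w (k * f w)%:E = k%:E * \int[mu]_w (f w)%:E.
Proof.
move=> k0 mf f0; under eq_integral do rewrite EFinM.
by apply: ge0_integralZl_EFin => //; [move=> w _; rewrite lee_fin|exact/measurable_EFinP].
Qed.

Lemma ge0_integralD_EFin (f g : T -> R) :
  measurable_fun setT f -> (forall w, 0 <= f w)%R ->
  measurable_fun setT g -> (forall w, 0 <= g w)%R ->
  \int[mu]_w (f w + g w)%:E = \int[mu]_w (f w)%:E + \int[mu]_w (g w)%:E.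
Proof.
move=> mf f0 mg g0; under eq_integral do rewrite EFinD.
by apply: ge0_integralD => //; by [move=> w _; rewrite lee_fin|exact/measurable_EFinP].
Qed.

End integral_EFin.

Section normal_moments.
Variable R : realType.
Local Notation lam := (@lebesgue_measure R).
Local Notation nu := (@normal_prob R 0 1).
Local Open Scope ereal_scope.

Lemma integral_normal_fun (s : R) : (0 < s)%R ->
  \int[lam]_x (normal_fun 0 s x)%:E = (s / normal_peak 1)%:E.
Proof.
move=> s0; have := integral_normal_pdf 0 s.
rewrite normal_pdfE ?gt_eqF //.
under eq_integral do rewrite EFinM.
rewrite ge0_integralZl //; last 3 first.
- by apply/measurable_EFinP; exact: measurable_normal_fun.
- by move=> x _; rewrite lee_fin normal_fun_ge0.
- by rewrite lee_fin normal_peak_ge0.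
have p0 : (0 < normal_peak s)%R by rewrite normal_peak_gt0 ?gt_eqF.
have -> : (s / normal_peak 1 = (normal_peak s)^-1)%R.
  rewrite /normal_peak !invrK expr1n mul1r -mulrnAr sqrtrM ?sqr_ge0 //.
  by rewrite sqrtr_sqr ger0_norm // ltW.
have : 0 <= \int[lam]_x (normal_fun 0 s x)%:E.
  by apply: integral_ge0 => x _; rewrite lee_fin normal_fun_ge0.
case: (\int[lam]_x _) => [r||] //= r0; last by rewrite gt0_muley ?lte_fin.
by rewrite -EFinM => -[r1]; rewrite -(mulKf (lt0r_neq0 p0) r) r1 mulr1.
Qed.

Lemma normal_fun_tangent (t x : R) : t != 0%R ->
  (normal_fun 0 1 x + (1 - t^-2) / 2 * (x ^+ 2 * normal_fun 0 1 x)
   <= normal_fun 0 t x)%R.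
Proof.
move=> t0; rewrite /normal_fun subr0 mulrA.
have -> : ((1 - t^-2) / 2 * x ^+ 2 =
    - x ^+ 2 / (t ^+ 2 *+ 2) - - x ^+ 2 / (1 ^+ 2 *+ 2))%R.
  by rewrite -!(mulr_natr (_ ^+ 2)); field.
exact: expR_tangent.
Qed.

Lemma integral_normal_fun_addZ_sqr (s a : R) : (0 < s)%R -> (0 <= a)%R ->
  \int[lam]_x (normal_fun 0 s x + a * (x ^+ 2 * normal_fun 0 1 x))%:E =
  (s / normal_peak 1)%:E + a%:E * \int[lam]_x (x ^+ 2 * normal_fun 0 1 x)%:E.
Proof.
move=> s0 a0.
have mx2 : measurable_fun setT (fun x : R => (x ^+ 2 * normal_fun 0 1 x)%:E).
  apply/measurable_EFinP/measurable_funM; last exact: measurable_normal_fun.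
  exact: measurable_funX.
under eq_integral do rewrite EFinD EFinM.
rewrite ge0_integralD //; last 4 first.
- by move=> x _; rewrite lee_fin normal_fun_ge0.
- by apply/measurable_EFinP; exact: measurable_normal_fun.
- by move=> x _; rewrite lee_fin mulr_ge0 // mulr_ge0 ?sqr_ge0 ?normal_fun_ge0.
- exact: emeasurable_funM.
rewrite integral_normal_fun // ge0_integralZl //.
by move=> x _; rewrite lee_fin mulr_ge0 ?sqr_ge0 ?normal_fun_ge0.
Qed.

Let measurable_normal_fun_addZ_sqr (s a : R) : measurable_fun setT
  (fun x => (normal_fun 0 s x + a * (x ^+ 2 * normal_fun 0 1 x))%:E).
Proof.
apply/measurable_EFinP/measurable_funD; first exact: measurable_normal_fun.
apply: measurable_funM => //; apply: measurable_funM => //.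
exact: measurable_normal_fun.
Qed.

(* By convexity of [expR], [φ_1 + (1 - t^-2)/2 x²φ_1 <= φ_t] pointwise, where
   [φ_s := normal_fun 0 s] has integral proportional to [s]: letting [t -> 1]
   from both sides differentiates in the scale, without integration by parts. *)
Lemma integral_sqr_normal_fun :
  \int[lam]_x (x ^+ 2 * normal_fun 0 1 x)%:E = (normal_peak 1)^-1%:E.
Proof.
set J := \int[lam]_x _; set c := ((normal_peak 1)^-1)%R.
have c0 : (0 < c)%R by rewrite invr_gt0 normal_peak_gt0 ?oner_neq0.
have J0 : 0 <= J.
  by apply: integral_ge0 => x _; rewrite lee_fin mulr_ge0 ?sqr_ge0 ?normal_fun_ge0.
have le_scale (s a s' a' : R) : (0 < s)%R -> (0 <= a)%R -> (0 < s')%R -> (0 <= a')%R ->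
    (forall x, normal_fun 0 s x + a * (x ^+ 2 * normal_fun 0 1 x) <=
               normal_fun 0 s' x + a' * (x ^+ 2 * normal_fun 0 1 x))%R ->
    (s * c)%:E + a%:E * J <= (s' * c)%:E + a'%:E * J.
  move=> s0 a0 s'0 a'0 le_ss'; rewrite -!integral_normal_fun_addZ_sqr //.
  apply: ge0_le_integral => //.
  - move=> x _; rewrite lee_fin addr_ge0 ?normal_fun_ge0 //.
    by rewrite mulr_ge0 // mulr_ge0 ?sqr_ge0 ?normal_fun_ge0.
  - exact: measurable_normal_fun_addZ_sqr.
  - exact: measurable_normal_fun_addZ_sqr.
  - by move=> x _; rewrite lee_fin.
have ub t : (1 < t)%R -> c%:E + ((1 - t^-2) / 2)%:E * J <= (t * c)%:E.
  move=> t1; have t0 : (0 < t)%R := lt_trans ltr01 t1.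
  have k0 : (0 <= (1 - t^-2) / 2)%R.
    by rewrite divr_ge0 // subr_ge0 invf_le1 ?exprn_gt0 // exprn_ege1 // ltW.
  have := le_scale 1%R _ t 0%R ltr01 k0 t0 (lexx _).
  rewrite mul1r mul0e adde0; apply=> x; rewrite mul0r addr0.
  by apply: normal_fun_tangent; rewrite gt_eqF.
have lb t : (0 < t < 1)%R -> c%:E <= (t * c)%:E + ((t^-2 - 1) / 2)%:E * J.
  move=> /andP[t0 t1].
  have k0 : (0 <= (t^-2 - 1) / 2)%R.
    by rewrite divr_ge0 // subr_ge0 invf_ge1 ?exprn_gt0 // exprn_ile1 // ltW.
  have := le_scale 1%R 0%R t _ ltr01 (lexx _) t0 k0.
  rewrite mul1r mul0e adde0; apply=> x; rewrite mul0r addr0.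
  have := @normal_fun_tangent t x (lt0r_neq0 t0).
  set y := (x ^+ 2 * _)%R; have -> : ((t^-2 - 1) / 2 * y = - ((1 - t^-2) / 2 * y))%R.
    by rewrite -mulNr -mulNr opprB.
  lra.
have Jfin : J \is a fin_num.
  rewrite ge0_fin_numE // ltNge leye_eq; apply/negP => /eqP Joo.
  have k0 : (0 < (1 - 2^-2) / 2 :> R)%R.
    by rewrite divr_gt0 // subr_gt0 invf_lt1 ?exprn_gt0 // expr_gt1 // ltr1n.
  by have := ub 2%R; rewrite ltr1n Joo gt0_muley ?lte_fin // addey // leye_eq => /(_ isT).
move: J0 ub lb; rewrite -(fineK Jfin) lee_fin => J0 ub lb; congr EFin.
apply: eq_of_scale_bounds (ltW c0) J0 _ _.
- by move=> t /ub; rewrite -EFinM -EFinD lee_fin.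
- by move=> t /lb; rewrite -EFinM -EFinD lee_fin.
Qed.

Lemma ge0_integral_normal_prob (f : R -> \bar R) :
  measurable_fun setT f -> (forall x, 0 <= f x) ->
  \int[nu]_x f x = \int[lam]_x (f x * (normal_pdf 0 1 x)%:E).
Proof.
move=> mf f0; have numu := normal_prob_dominates (0 : R) 1.
rewrite -(Radon_Nikodym_SigmaFinite.change_of_variables numu) //.
apply: ae_eq_integral => //.
- apply: emeasurable_funM => //.
  exact: measurable_int (Radon_Nikodym_SigmaFinite.f_integrable numu).
- apply: emeasurable_funM => //.
  by apply/measurable_EFinP; exact: measurable_normal_pdf.
apply: ae_eqe_mul2l; apply: integral_ae_eq => //.
- exact: Radon_Nikodym_SigmaFinite.f_integrable numu.
- by apply/measurable_EFinP; exact: measurable_normal_pdf.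
- by move=> E _ mE; rewrite -Radon_Nikodym_SigmaFinite.f_integral.
Qed.

Lemma ge0_integral_normal_prob_EFin (f : R -> R) :
  measurable_fun setT f -> (forall x, 0 <= f x)%R ->
  \int[nu]_x (f x)%:E = (normal_peak 1)%:E * \int[lam]_x (f x * normal_fun 0 1 x)%:E.
Proof.
move=> mf f0; rewrite ge0_integral_normal_prob; last 2 first.
- exact/measurable_EFinP.
- by move=> x; rewrite lee_fin.
rewrite normal_pdfE ?oner_neq0 //.
under eq_integral do rewrite -EFinM mulrCA EFinM.
apply: ge0_integralZl => //.
- by apply/measurable_EFinP/measurable_funM => //; exact: measurable_normal_fun.
- by move=> x _; rewrite lee_fin mulr_ge0 ?normal_fun_ge0.
- by rewrite lee_fin normal_peak_ge0.
Qed.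

Lemma normal_prob_second_moment : \int[nu]_x (x ^+ 2)%:E = 1.
Proof.
rewrite ge0_integral_normal_prob_EFin ?integral_sqr_normal_fun; last 2 first.
- exact: measurable_funX.
- by move=> x; rewrite sqr_ge0.
by rewrite -EFinM divff // gt_eqF // normal_peak_gt0 // oner_neq0.
Qed.

Lemma pow4_normal_fun_le (x : R) :
  (x ^+ 4 * normal_fun 0 1 x <= 64 * normal_fun 0 (Num.sqrt 2) x)%R.
Proof.
rewrite /normal_fun sqr_sqrtr ?ler0n // subr0.
set y := (x ^+ 2 / 8)%R.
have -> : (- x ^+ 2 / (1 ^+ 2 *+ 2) = - x ^+ 2 / (2 *+ 2) + - y + - y)%R.
  by rewrite /y -!(mulr_natr (_ ^+ 2)) -(mulr_natr 2); field.
have -> : (x ^+ 4 = 64 * y ^+ 2)%R by rewrite /y; field.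
rewrite !expRD -mulrA ler_pM2l //.
have -> : forall E e : R, (y ^+ 2 * (E * e * e) = (y * e) ^+ 2 * E)%R.
  by move=> E e; ring.
have /andP[ye0 ye1] : (0 <= y * expR (- y) <= 1)%R.
  rewrite mulr_ge0 ?expR_ge0 ?divr_ge0 ?sqr_ge0 //=.
  by rewrite expRN ler_pdivrMr ?expR_gt0 // mul1r (le_trans _ (expR_ge1Dx y)) // lerDr.
by rewrite ler_piMl ?expR_ge0 // exprn_ile1.
Qed.

Lemma normal_prob_fourth_moment_lty : \int[nu]_x (x ^+ 4)%:E < +oo.
Proof.
rewrite ge0_integral_normal_prob_EFin; last 2 first.
- exact: measurable_funX.
- by move=> x; rewrite exprn_even_ge0.
apply: (@le_lt_trans _ _ ((normal_peak 1)%:E * (64 * (Num.sqrt 2 / normal_peak 1))%:E)).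
  apply: lee_wpmul2l; first by rewrite lee_fin normal_peak_ge0.
  rewrite EFinM -integral_normal_fun ?sqrtr_gt0 ?ltr0n // -ge0_integralZl //.
  - apply: ge0_le_integral => //.
    + by move=> x _; rewrite lee_fin mulr_ge0 ?exprn_even_ge0 ?normal_fun_ge0.
    + apply/measurable_EFinP/measurable_funM => //; exact: measurable_normal_fun.
    + apply: emeasurable_funM => //.
      by apply/measurable_EFinP; exact: measurable_normal_fun.
    + by move=> x _; rewrite lee_fin pow4_normal_fun_le.
  - by apply/measurable_EFinP; exact: measurable_normal_fun.
  - by move=> x _; rewrite lee_fin normal_fun_ge0.
by rewrite -EFinM ltry.
Qed.

End normal_moments.

Section standard_normal_rv.
Context {R : realType} {dsp : measure_display} {T : measurableType dsp}.
Variable P : probability T R.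
Local Notation nu := (@normal_prob R 0 1).
(* [normal_prob] is a measure on the Lebesgue measurable type [measurableTypeR R],
   whose display differs from that of the canonical measurable structure of [R];
   random variables are cast to it to form their distributions. *)
Local Notation LR := (measurableTypeR R).
Local Open Scope ereal_scope.

Lemma std_normal_rv_ge0_integral (X : T -> R) (f : R -> \bar R) :
  std_normal_rv P X -> measurable_fun setT f -> (forall x, 0 <= f x) ->
  \int[P]_w f (X w) = \int[nu]_x f x.
Proof.
case=> mX lawX mf f0.
have mX' : measurable_fun [set: T] (X : T -> LR) := mX.
pose X' : {mfun T >-> LR} := HB.pack (X : T -> LR) (isMeasurableFun.Build _ _ _ _ _ mX').
rewrite -[LHS]/(\int[P]_w ((f : LR -> _) \o X') w) -ge0_integral_distribution //.
by apply: (@eq_measure_integral _ LR _ setT nu) => A mA _; exact: lawX.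
Qed.

Lemma std_normal_integral_sqr (X : T -> R) : std_normal_rv P X ->
  \int[P]_w (X w ^+ 2)%:E = 1.
Proof.
move=> hX; rewrite (std_normal_rv_ge0_integral (f := fun x => (x ^+ 2)%:E) hX).
- exact: normal_prob_second_moment.
- by apply/measurable_EFinP; exact: measurable_funX.
- by move=> x; rewrite lee_fin sqr_ge0.
Qed.

Lemma indep_std_normal_ge0_integralM (X Y : T -> R) (f g : R -> \bar R) :
  measurable_fun setT X -> measurable_fun setT Y ->
  (forall A B, measurable A -> measurable B ->
     P (X @^-1` A `&` Y @^-1` B) = nu A * nu B) ->
  measurable_fun setT f -> (forall x, 0 <= f x) ->
  measurable_fun setT g -> (forall x, 0 <= g x) ->
  \int[P]_w (f (X w) * g (Y w)) = \int[nu]_x f x * \int[nu]_x g x.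
Proof.
move=> mX mY lawXY mf f0 mg g0.
have mf' : measurable_fun [set: LR] f := mf.
have mg' : measurable_fun [set: LR] g := mg.
pose XY0 w := ((X w : LR), (Y w : LR)).
have mXY : measurable_fun setT XY0 by exact: measurable_fun_pair.
pose XY : {mfun T >-> (LR * LR)%type} := HB.pack XY0 (isMeasurableFun.Build _ _ _ _ _ mXY).
pose h (z : LR * LR) := f z.1 * g z.2.
have mh : measurable_fun setT h.
  apply: emeasurable_funM; first exact: measurableT_comp mf' measurable_fst.
  exact: measurableT_comp mg' measurable_snd.
have h0 z : 0 <= h z by rewrite mule_ge0.
rewrite -[LHS]/(\int[P]_w (h \o XY) w) -ge0_integral_distribution //.
rewrite (@eq_measure_integral _ _ _ setT (nu \x nu)); last first.
  move=> A mA _; apply/esym; apply: (product_measure_unique (m' := distribution P XY)) mA.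
  by move=> A1 B1; exact: lawXY.
rewrite fubini_tonelli1 // /fubini_F /h /=.
under eq_integral do rewrite ge0_integralZl //.
by rewrite ge0_integralZr // integral_ge0.
Qed.

End standard_normal_rv.

Section std_gauss_vector.
Context {R : realType} {dsp : measure_display} {T : measurableType dsp}.
Variables (P : probability T R) (n : nat) (X : 'I_n -> T -> R).
Hypothesis hX : std_gauss_vector P X.
Local Notation nu := (@normal_prob R 0 1).
Local Open Scope ereal_scope.

Lemma std_gauss_vector_measurable i : measurable_fun setT (X i).
Proof. by case: hX. Qed.

Lemma std_gauss_vector_bigcap (B : 'I_n -> set R) : (forall i, measurable (B i)) ->
  P (\bigcap_(i in [set: 'I_n]) (X i @^-1` B i)) = \prod_(i < n) nu (B i).
Proof.
move=> mB; rewrite hX.2 // -prodEFin; apply: eq_bigr => i _.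
by rewrite fineK // fin_num_measure //; exact: mB.
Qed.

Lemma std_gauss_vector_coord i : std_normal_rv P (X i).
Proof.
split; first exact: std_gauss_vector_measurable.
move=> A mA; pose B k := if k == i then A else setT.
have -> : X i @^-1` A = \bigcap_(k in [set: 'I_n]) (X k @^-1` B k).
  apply/seteqP; split => [w Aw k _|w /(_ i I)]; last by rewrite /B eqxx.
  by rewrite /B; case: eqP => // ->.
rewrite std_gauss_vector_bigcap => [|k]; last by rewrite /B; case: ifP.
rewrite (bigD1 i) //= big1 ?mule1 /B ?eqxx // => k /negbTE ->.
exact: probability_setT.
Qed.

Lemma std_gauss_vector_indep i j : i != j -> forall A B, measurable A -> measurable B ->
  P (X i @^-1` A `&` X j @^-1` B) = nu A * nu B.
Proof.
move=> ij A B mA mB; pose C k := if k == i then A else if k == j then B else setT.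
have -> : X i @^-1` A `&` X j @^-1` B = \bigcap_(k in [set: 'I_n]) (X k @^-1` C k).
  apply/seteqP; split => [w [Aw Bw] k _|w XC]; last first.
    by split; [move: (XC i I)|move: (XC j I)]; rewrite /C ?eqxx // eq_sym (negbTE ij).
  by rewrite /C; case: eqP => [-> //|_]; case: eqP => // ->.
rewrite std_gauss_vector_bigcap => [|k]; last by rewrite /C; case: ifP => _ //; case: ifP.
rewrite (bigD1 i) //= (bigD1 j) 1?eq_sym //= big1 ?mule1.
  by rewrite /C eqxx eq_sym (negbTE ij) eqxx.
move=> k /andP[ki kj]; rewrite /C (negbTE ki) (negbTE kj).
exact: probability_setT.
Qed.

End std_gauss_vector.

Definition normal_moment4 (R : realType) : R :=
  fine (\int[@normal_prob R 0 1]_x (x ^+ 4)%:E)%E.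

Lemma normal_moment4E (R : realType) :
  (\int[@normal_prob R 0 1]_x (x ^+ 4)%:E = (normal_moment4 R)%:E)%E.
Proof.
rewrite fineK // ge0_fin_numE ?normal_prob_fourth_moment_lty //.
by apply: integral_ge0 => x _; rewrite lee_fin exprn_even_ge0.
Qed.

Lemma sqnorm_ge0 (R : realType) n (x : 'I_n -> R) : 0 <= sqnorm x.
Proof. by apply: sumr_ge0 => i _; exact: sqr_ge0. Qed.

Section std_gauss_sqnorm.
Context {R : realType} {dsp : measure_display} {T : measurableType dsp}.
Variables (P : probability T R) (d : nat) (X : 'I_d -> T -> R).
Hypothesis hX : std_gauss_vector P X.
Local Notation S w := (sqnorm (fun i => X i w)).
Local Notation m4 := (normal_moment4 R).
Local Open Scope ereal_scope.

Let mX := std_gauss_vector_measurable hX.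

Lemma std_gauss_integral_sqrM i j :
  \int[P]_w (X i w ^+ 2 * X j w ^+ 2)%:E = (if j == i then m4 else 1)%:E.
Proof.
have mx2 : measurable_fun setT (fun x : R => (x ^+ 2)%:E).
  by apply/measurable_EFinP; exact: measurable_funX.
have x20 (x : R) : 0 <= (x ^+ 2)%:E by rewrite lee_fin sqr_ge0.
case: eqP => [->|/eqP ji].
  rewrite -normal_moment4E -(std_normal_rv_ge0_integral (f := fun x => (x ^+ 4)%:E)
    (std_gauss_vector_coord hX i)).
  - by apply: eq_integral => w _; rewrite -exprD.
  - by apply/measurable_EFinP; exact: measurable_funX.
  - by move=> x; rewrite lee_fin exprn_even_ge0.
have ij : i != j by rewrite eq_sym.
have := indep_std_normal_ge0_integralM (mX i) (mX j) (std_gauss_vector_indep hX ij)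
  mx2 x20 mx2 x20.
rewrite normal_prob_second_moment mule1 => <-.
by apply: eq_integral => w _; rewrite EFinM.
Qed.

Lemma measurable_std_gauss_sqnorm : measurable_fun setT (fun w => S w).
Proof. by apply: measurable_sum => i; apply: measurable_funX. Qed.

Lemma std_gauss_integral_sqnorm : \int[P]_w (S w)%:E = d%:R%:E.
Proof.
rewrite /sqnorm; under eq_integral do rewrite -sumEFin.
rewrite ge0_integral_sum //; last 2 first.
- by move=> i; apply/measurable_EFinP; exact: measurable_funX.
- by move=> i w _; rewrite lee_fin sqr_ge0.
under eq_bigr do rewrite (std_normal_integral_sqr (std_gauss_vector_coord hX _)).
by rewrite sumEFin sumr_const card_ord.
Qed.


Lemma std_gauss_integral_sqr_sqnorm :
  \int[P]_w (S w ^+ 2)%:E = (d%:R * (d%:R + m4 - 1))%:E.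
Proof.
have mXX i j : measurable_fun setT (fun w => X i w ^+ 2 * X j w ^+ 2)%R.
  by apply: measurable_funM; exact: measurable_funX.
have S2E w : (S w ^+ 2 = \sum_(i < d) \sum_(j < d) X i w ^+ 2 * X j w ^+ 2)%R.
  by rewrite expr2 mulr_suml; apply: eq_bigr => i _; rewrite mulr_sumr.
have sum_ifE i : (\sum_(j < d) (if j == i then m4 else 1) = d%:R + m4 - 1)%R.
  rewrite (eq_bigr (fun j => 1 + (if j == i then m4 - 1 else 0)))%R; last first.
    by move=> j _; case: eqP => _; rewrite ?addr0 // addrC subrK.
  by rewrite big_split /= sumr_const card_ord -big_mkcond /= big_pred1_eq addrA.
under eq_integral do rewrite S2E -sumEFin.
rewrite ge0_integral_sum //; last 2 first.
- by move=> i; apply/measurable_EFinP; exact: measurable_sum.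
- by move=> i w _; rewrite lee_fin sumr_ge0 // => j _; rewrite mulr_ge0 ?sqr_ge0.
under eq_bigr => i _.
  under eq_integral do rewrite -sumEFin.
  rewrite ge0_integral_sum //; last 2 first.
  - by move=> j; apply/measurable_EFinP.
  - by move=> j w _; rewrite lee_fin mulr_ge0 ?sqr_ge0.
  under eq_bigr do rewrite std_gauss_integral_sqrM.
  rewrite sumEFin sum_ifE.
  over.
by rewrite sumEFin sumr_const card_ord mulr_natl.
Qed.

Lemma std_gauss_integral_sqr_sqnorm_dev : (0 < d)%N ->
  \int[P]_w ((S w / d%:R - 1) ^+ 2)%:E = ((m4 - 1) / d%:R)%:E.
Proof.
move=> d0; have dn0 : (d%:R != 0 :> R)%R by rewrite pnatr_eq0 -lt0n.
have d'0 : (0 <= 2 / d%:R :> R)%R by rewrite divr_ge0 ?ler0n.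
have d''0 : (0 <= d%:R ^- 2 :> R)%R by rewrite invr_ge0 exprn_ge0 ?ler0n.
have mS := measurable_std_gauss_sqnorm.
have mS2 : measurable_fun setT (fun w => S w ^+ 2)%R by exact: measurable_funX.
have S0 w : (0 <= S w)%R := sqnorm_ge0 _.
have S20 w : (0 <= S w ^+ 2)%R := sqr_ge0 _.
have expand w : ((S w / d%:R - 1) ^+ 2 + 2 / d%:R * S w =
                 (d%:R ^- 2 * S w ^+ 2) + 1)%R by field.
have := congr1 (fun f => \int[P]_w (f w)%:E) (funext expand); rewrite /=.
have mdev : measurable_fun setT (fun w => (S w / d%:R - 1) ^+ 2)%R.
  by apply: measurable_funX; apply: measurable_funB => //; exact: measurable_funM.
have dev0 w : (0 <= (S w / d%:R - 1) ^+ 2)%R := sqr_ge0 _.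
have mlin : measurable_fun setT (fun w => 2 / d%:R * S w)%R by exact: measurable_funM.
have lin0 w : (0 <= 2 / d%:R * S w)%R by rewrite mulr_ge0.
have mquad : measurable_fun setT (fun w => d%:R ^- 2 * S w ^+ 2)%R.
  exact: measurable_funM.
have quad0 w : (0 <= d%:R ^- 2 * S w ^+ 2)%R by rewrite mulr_ge0.
rewrite !ge0_integralD_EFin //.
rewrite !ge0_integralZl_EFinM // std_gauss_integral_sqnorm.
rewrite std_gauss_integral_sqr_sqnorm integral_cst //= probability_setT mul1e -!EFinM.
have : 0 <= \int[P]_w ((S w / d%:R - 1) ^+ 2)%:E.
  by apply: integral_ge0 => w _; rewrite lee_fin sqr_ge0.
case: (\int[P]_w _) => [r| |] // _; rewrite -!EFinD => -[r_eq]; congr EFin.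
by apply: (addIr (2 / d%:R * d%:R)%R); rewrite r_eq; field.
Qed.

End std_gauss_sqnorm.

Section std_normal_min1_expR.
Context {R : realType} {dsp : measure_display} {T : measurableType dsp}.
Variables (P : probability T R) (Z : T -> R).
Hypothesis hZ : std_normal_rv P Z.
Local Open Scope ereal_scope.

Let mZ : measurable_fun setT Z := hZ.1.

Lemma std_normal_integrableM (h : T -> R) : measurable_fun setT h ->
  (forall w, `|h w| <= 1)%R -> P.-integrable setT (fun w => (Z w * h w)%:E).
Proof.
move=> mh h1; have mZh : measurable_fun setT (fun w => Z w * h w)%R.
  exact: measurable_funM.
apply/integrableP; split; first exact/measurable_EFinP.
apply: (@le_lt_trans _ _ (\int[P]_w (1 + Z w ^+ 2)%:E)).
  apply: ge0_le_integral => //.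
  - by apply/measurableT_comp => //; exact/measurable_EFinP.
  - by apply/measurable_EFinP/measurable_funD => //; exact: measurable_funX.
  move=> w _; rewrite lee_fin normrM (le_trans _ (normr_le1Dsqr (Z w))) //.
  by rewrite ler_piMr.
rewrite ge0_integralD_EFin //; last 2 first.
- exact: measurable_funX.
- by move=> w; rewrite sqr_ge0.
by rewrite std_normal_integral_sqr // integral_cst //= probability_setT mul1e -EFinD ltry.
Qed.


Lemma measurable_min1_expR (a : T -> R) : measurable_fun setT a ->
  measurable_fun setT (fun w => Num.min 1 (expR (a w)))%R.
Proof.
move=> ma; apply: (measurable_minr (f := cst 1%R) (g := fun w => expR (a w))) => //.
exact: measurableT_comp ma.
Qed.

Lemma std_normal_expectation_min1_expR_dist (a b Q : T -> R) (q t : R) :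
  measurable_fun setT a -> measurable_fun setT b -> measurable_fun setT Q ->
  (forall w, `|a w - b w| <= `|Q w|)%R -> \int[P]_w (Q w ^+ 2)%:E = q%:E -> (0 < t)%R ->
  `| 'E_P[fun w => (Z w * Num.min 1 (expR (a w)))%R]
     - 'E_P[fun w => (Z w * Num.min 1 (expR (b w)))%R] | <= ((t + t^-1 * q) / 2)%:E.
Proof.
move=> ma mb mQ abQ Q2 t0.
have g1 u : (`|Num.min 1 (expR u)| <= 1 :> R)%R.
  by rewrite ger0_norm ?ge_min ?lexx // le_min ler01 expR_ge0.
have iZa := std_normal_integrableM (measurable_min1_expR ma) (fun w => g1 (a w)).
have iZb := std_normal_integrableM (measurable_min1_expR mb) (fun w => g1 (b w)).
rewrite unlock -(integralB_EFin _ iZa iZb) //.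
apply: (le_trans (le_abse_integral _ _ _)) => //.
  by apply: emeasurable_funB; [exact: measurable_int iZa|exact: measurable_int iZb].
pose k1 := (2^-1 * t)%R; pose k2 := (2^-1 * t^-1)%R.
have k10 : (0 <= k1)%R by rewrite mulr_ge0 // ltW.
have k20 : (0 <= k2)%R by rewrite mulr_ge0 // invr_ge0 ltW.
apply: (@le_trans _ _ (\int[P]_w (k1 * Z w ^+ 2 + k2 * Q w ^+ 2)%:E)).
  apply: ge0_le_integral => //.
  - apply: measurableT_comp => //; apply: emeasurable_funB.
    + exact: measurable_int iZa.
    + exact: measurable_int iZb.
  - by apply/measurable_EFinP/measurable_funD; apply: measurable_funM => //;
      exact: measurable_funX.
  move=> w _; rewrite -EFinB abse_EFin lee_fin -mulrBr normrM.
  apply: (le_trans (ler_wpM2l (normr_ge0 _) (le_trans (min1_expR_lipschitz _ _) (abQ w)))).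
  apply: (le_trans (mulr_le_AMGM _ _ t0)).
  by rewrite !real_normK ?num_real // /k1 /k2; lra.
rewrite ge0_integralD_EFin //; last 4 first.
- by apply: measurable_funM => //; exact: measurable_funX.
- by move=> w; rewrite mulr_ge0 ?sqr_ge0.
- by apply: measurable_funM => //; exact: measurable_funX.
- by move=> w; rewrite mulr_ge0 ?sqr_ge0.
rewrite !ge0_integralZl_EFinM //; last 4 first.
- exact: measurable_funX.
- by move=> w; rewrite sqr_ge0.
- exact: measurable_funX.
- by move=> w; rewrite sqr_ge0.
rewrite std_normal_integral_sqr // Q2 mule1 -EFinM -EFinD /k1 /k2.
by rewrite lee_fin; lra.
Qed.

End std_normal_min1_expR.

Lemma std_gauss_sqnorm_min1_expR_dist {R : realType} {dsp : measure_display}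
    {T : measurableType dsp} (P : probability T R) (d : nat)
    (Z1 Z2 : T -> R) (X : 'I_d -> T -> R) (l alpha t : R) :
  measurable_fun setT Z1 -> std_normal_rv P Z2 -> std_gauss_vector P X ->
  (0 < d)%N -> 0 < t ->
  (`| 'E_P[fun w => (Z2 w * Num.min 1 (expR (- (l * alpha * Z1 w)
                      - l ^+ 2 * sqnorm (fun i => X i w) / (2 * d%:R))))%R]
      - 'E_P[fun w => (Z2 w * Num.min 1 (expR (- (l * alpha * Z1 w) - l ^+ 2 / 2)))%R] |
   <= ((t + t^-1 * ((l ^+ 2 / 2) ^+ 2 * ((normal_moment4 R - 1) / d%:R))) / 2)%:E)%E.
Proof.
move=> mZ1 hZ2 hX d0 t0; have dn0 : d%:R != 0 :> R by rewrite pnatr_eq0 -lt0n.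
have mS := measurable_std_gauss_sqnorm hX.
have mdev : measurable_fun setT (fun w => sqnorm (fun i => X i w) / d%:R - 1).
  by apply: measurable_funB => //; exact: measurable_funM.
have mlZ1 : measurable_fun setT (fun w => - (l * alpha * Z1 w)).
  by apply: measurableT_comp => //; exact: measurable_funM.
apply: (std_normal_expectation_min1_expR_dist hZ2
  (Q := fun w => l ^+ 2 / 2 * (sqnorm (fun i => X i w) / d%:R - 1))) => //.
- apply: measurable_funB => //; apply: measurable_funM => //.
  exact: measurable_funM.
- exact: measurable_funB.
- exact: measurable_funM.
- move=> w; rewrite -normrN le_eqVlt; apply/orP; left; apply/eqP; congr `|_|.
  by field.
- under eq_integral do rewrite exprMn.
  rewrite ge0_integralZl_EFinM ?std_gauss_integral_sqr_sqnorm_dev -?EFinM ?sqr_ge0 //.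
    exact: measurable_funX.
  by move=> w; rewrite sqr_ge0.
Qed.

Theorem lemma5 (R : realType) (l : R) (hl : 0 < l)
  (dsp : nat -> measure_display) (T : forall n, measurableType (dsp n))
  (P : forall n, probability (T n) R)
  (Z1 Z2 : forall n, T n -> R) (Zx : forall n, 'I_n.+1 -> T n -> R)
  (hZ1 : forall n, std_normal_rv (P n) (Z1 n))
  (hZ2 : forall n, std_normal_rv (P n) (Z2 n))
  (hZx : forall n, std_gauss_vector (P n) (Zx n)) :
  forall eps : R, 0 < eps -> exists N : nat, forall n : nat, (N <= n)%N ->
    forall alpha : R, 0 <= alpha ->
    (`| 'E_(P n)[fun w => (Z2 n w *
            Num.min 1 (expR (- (l * alpha * Z1 n w)
                             - l ^+ 2 * sqnorm (fun i => Zx n i w)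
                               / (2 * n.+1%:R))))%R]
        - 'E_(P n)[fun w => (Z2 n w *
            Num.min 1 (expR (- (l * alpha * Z1 n w) - l ^+ 2 / 2)))%R] |
     < eps%:E)%E.
Proof.
move=> eps e0.
pose K := (l ^+ 2 / 2) ^+ 2 * (normal_moment4 R - 1).
exists (Num.bound (`|K| / eps ^+ 2)) => n Nn alpha _.
move/le_lt_trans: (std_gauss_sqnorm_min1_expR_dist l alpha (hZ1 n).1 (hZ2 n) (hZx n)
  (ltn0Sn n) e0); apply; rewrite lte_fin; apply: AMGM_bound_lt => //.
have Kn : `|K| / eps ^+ 2 < n.+1%:R.
  apply: (lt_le_trans (archi_boundP _)); first by rewrite divr_ge0 ?sqr_ge0.
  by rewrite ler_nat (leq_trans Nn).
rewrite mulrA -/K ltr_pdivrMr ?ltr0n // -ltr_pdivrMl ?exprn_gt0 //.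
rewrite mulrC; apply: le_lt_trans Kn.
by rewrite ler_pM2r ?invr_gt0 ?exprn_gt0 // ler_norm.
Qed.
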